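(* Let $k \geq 1$ and $p \geq 1$ be integers, let $B \in \mathbb{R}^{N\times N}$, let $P \in \mathbb{R}^{N\times N}$ be a diagonal matrix whose diagonal entries are each $0$ or $1$, and let $y(t) = e^{tB}y^0$ be the solution of $y'(t) = B y(t)$ for some $y^0 \in \mathbb{R}^N$. Fix $t_n$ and $\Delta t > 0$. Apply one step of the LTS-AB$k$($p$) scheme (defined in the context) with exact input data $$y_{n-\ell} = y(t_n - \ell \Delta t), \quad \ell = 0,\dots,k-1, \qquad \widetilde y_{-j/p} = P\, y(t_n - j\Delta t/p), \quad j = 1,\dots,k-1,$$ producing $y_{n+1}$. Then the scheme is consistent of order $k$: there is a constant $C$ depending only on $k$, $p$, $B$, $P$ and $y^0$ (and on an upper bound for $|t_n|$) such that for all sufficiently small $\Delta t>0$, $$\| y_{n+1} - y(t_n + \Delta t)\| \leq C\, \Delta t^{k+1}.$$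
   Context: Polynomials: for integer $j\ge 0$, $\gamma_j(\xi) = (-1)^j \int_0^{\xi} \binom{-s}{j}\, ds$ and $\widetilde\gamma_j(\xi) = \gamma_j'(\xi) = (-1)^j\binom{-\xi}{j} = \xi(\xi+1)\cdots(\xi+j-1)/j!$ (with $\widetilde\gamma_0\equiv 1$), where $\binom{x}{j} = x(x-1)\cdots(x-j+1)/j!$. Adams–Bashforth coefficients: $\alpha_\ell = (-1)^\ell \sum_{i=\ell}^{k-1}\binom{i}{\ell}\gamma_i(1)$, $\ell=0,\dots,k-1$ (the classical $k$-step Adams–Bashforth scheme is $y_{n+1} = y_n + \Delta t\, B\sum_{\ell=0}^{k-1}\alpha_\ell y_{n-\ell}$). LTS coefficients: $\beta_{m,\ell} = \sum_{i=0}^{k-1} \alpha_i \sum_{j=\ell}^{k-1} (-1)^\ell \binom{j}{\ell}\, \widetilde\gamma_j\!\left(\frac{m-i}{p}\right)$ for $m=0,\dots,p-1$, $\ell=0,\dots,k-1$. LTS-AB$k$($p$) step: set $\widetilde y_0 := y_n$ (the values $\widetilde y_{-j/p}$, $j=1,\dots,k-1$, are given inputs; note $\widetilde y_{-j/p}$ for $j \geq p$ refers to a past time $t_n - j\Delta t/p$ as well). For $m = 0,1,\dots,p-1$ compute $$\widetilde y_{(m+1)/p} = \widetilde y_{m/p} + \frac{\Delta t}{p}\, B(I-P)\sum_{\ell=0}^{k-1}\beta_{m,\ell}\, y_{n-\ell} + \frac{\Delta t}{p}\, BP\sum_{\ell=0}^{k-1}\alpha_\ell\, \widetilde y_{(m-\ell)/p},$$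 and set $y_{n+1} := \widetilde y_1$. For $P=0$ or $p=1$ this reduces to the classical $k$-step Adams–Bashforth method. Here $I$ is the $N\times N$ identity and $\|\cdot\|$ any norm on $\mathbb{R}^N$. *)

From Stdlib Require Import Reals Lra Lia Arith.
Open Scope R_scope.

(* Vectors of R^N are represented as functions nat -> R (only components
   0..N-1 matter); N x N matrices as nat -> nat -> R (only entries < N matter). *)
Definition Vec := nat -> R.
Definition Mat := nat -> nat -> R.

Fixpoint rsum (n : nat) (f : nat -> R) : R :=
  match n with O => 0 | S n' => rsum n' f + f n' end.

Definition vadd (u v : Vec) : Vec := fun i => u i + v i.
Definition vsub (u v : Vec) : Vec := fun i => u i - v i.
Definition vscale (c : R) (v : Vec) : Vec := fun i => c * v i.
Definition vsum (n : nat) (f : nat -> Vec) : Vec := fun i => rsum n (fun l => f l i).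
Definition matvec (N : nat) (A : Mat) (v : Vec) : Vec :=
  fun i => rsum N (fun j => A i j * v j).

(* generalized binomial coefficient binom(x,j) = x(x-1)...(x-j+1)/j! *)
Fixpoint gbinom (x : R) (j : nat) : R :=
  match j with
  | O => 1
  | S j' => gbinom x j' * (x - INR j') / INR (S j')
  end.

Lemma gbinom_cont (j : nat) : forall s, continuity_pt (fun s => gbinom (- s) j) s.
Proof.
  induction j as [|j IH]; intros s; simpl.
  - apply continuity_pt_const. intros a b; reflexivity.
  - unfold Rdiv.
    apply (continuity_pt_mult (fun s => gbinom (- s) j * (- s - INR j))
                              (fun _ => / INR (S j))).
    + apply (continuity_pt_mult (fun s => gbinom (- s) j) (fun s => - s - INR j)).
      * apply IH.
      * apply (continuity_pt_minus (fun s => - s) (fun _ => INR j)).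
        -- apply (continuity_pt_opp (fun s => s)). apply derivable_continuous_pt, derivable_pt_id.
        -- apply continuity_pt_const. intros a b; reflexivity.
    + apply continuity_pt_const. intros a b; reflexivity.
Qed.

Definition gamma1 (j : nat) : R :=
  (-1) ^ j * RiemannInt (@continuity_implies_RiemannInt
                           (fun s => gbinom (- s) j) 0 1 (Rlt_le 0 1 Rlt_0_1)
                           (fun x _ => gbinom_cont j x)).

Definition gtilde (j : nat) (xi : R) : R := (-1) ^ j * gbinom (- xi) j.

Definition alpha (k l : nat) : R :=
  (-1) ^ l * rsum k (fun i => if (l <=? i)%nat then C i l * gamma1 i else 0).

Definition beta (k p m l : nat) : R :=
  rsum k (fun i => alpha k i *
    rsum k (fun j => if (l <=? j)%nat
                     then (-1) ^ l * C j l * gtilde j ((INR m - INR i) / INR p)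
                     else 0)).

Section LTS.
Variables (N : nat) (B P : Mat) (k p : nat) (dt : R).
(* ys l = y_{n-l} (l = 0..k-1);  neg j = tilde y_{-j/p} (j = 1..k-1) *)
Variables (ys : nat -> Vec) (neg : nat -> Vec).

(* tilde y_{(m-l)/p}, given h i = tilde y_{i/p} for 0 <= i <= m *)
Definition lts_lookup (h : nat -> Vec) (m l : nat) : Vec :=
  if (l <=? m)%nat then h (m - l)%nat else neg (l - m)%nat.

(* tilde y_{(m+1)/p} computed from the history h *)
Definition lts_incr (m : nat) (h : nat -> Vec) : Vec :=
  let c := dt / INR p in
  let s1 := vsum k (fun l => vscale (beta k p m l) (ys l)) in
  let s2 := vsum k (fun l => vscale (alpha k l) (lts_lookup h m l)) in
  vadd (vadd (h m) (vscale c (matvec N B (vsub s1 (matvec N P s1)))))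
       (vscale c (matvec N B (matvec N P s2))).

(* lts_hist m i = tilde y_{i/p} for 0 <= i <= m *)
Fixpoint lts_hist (m : nat) : nat -> Vec :=
  match m with
  | O => fun _ => ys O
  | S m' => let h := lts_hist m' in
            fun i => if (i <=? m')%nat then h i else lts_incr m' h
  end.

(* y_{n+1} := tilde y_1 *)
Definition lts_step : Vec := lts_hist p p.
End LTS.

From Stdlib Require Import Reals Lra Lia Arith.
From Coquelicot Require Import Coquelicot.
Open Scope R_scope.

(** Write h = dt/p and e_m for the error of the fine value tilde y_{m/p}
    against y(tn + m h), computed from exact data.  The proof has four parts.
    - Newton interpolation: backward differences at 0, -1, ..., -(K-1) recover
      every polynomial of degree < K in the Newton basis [gtilde]; integrating
      that basis over [0,1] gives gamma_j(1), so the AB weights [alpha] are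
      exact on polynomials of degree < k, and the weights [beta] are the AB
      weights applied to the interpolant of the coarse data.
    - Taylor: the derivatives of y are B^r y, bounded on a compact window, so
      Taylor remainders of order k around tn are O(dt^k).
    - Local errors: hence the coarse (1-P) part of a substep differs from the
      exact AB combination by O(dt^k), and one AB substep of size h applied
      to y has local error O(dt^(k+1)).
    - Error recursion: as P is a 0/1 diagonal, the fine part P only uses
      earlier fine values or exact data, so |e_(m+1)| <= growth max_(q<=m) |e_q|
      + O(dt^(k+1)); after p substeps |e_p| = O(dt^(k+1)) componentwise, and
      every norm on R^N is bounded by a multiple of the max-norm. *)

Lemma rsum_ext n F G : (forall l, (l < n)%nat -> F l = G l) -> rsum n F = rsum n G.
Proof. induction n; simpl; intros H; auto. rewrite IHn, H; auto. Qed.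

Lemma rsum_plus n F G : rsum n (fun l => F l + G l) = rsum n F + rsum n G.
Proof. induction n; simpl; [lra|]. rewrite IHn; lra. Qed.

Lemma rsum_minus n F G : rsum n (fun l => F l - G l) = rsum n F - rsum n G.
Proof. induction n; simpl; [lra|]. rewrite IHn; lra. Qed.

Lemma rsum_scal n c F : rsum n (fun l => c * F l) = c * rsum n F.
Proof. induction n; simpl; [lra|]. rewrite IHn; lra. Qed.

Lemma rsum_mulr n c F : rsum n F * c = rsum n (fun l => F l * c).
Proof. rewrite Rmult_comm, <- rsum_scal. apply rsum_ext; intros; ring. Qed.

Lemma rsum_zero n : rsum n (fun _ => 0) = 0.
Proof. induction n; simpl; [lra|]. rewrite IHn; lra. Qed.

Lemma rsum_swap n m (F : nat -> nat -> R) :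
  rsum n (fun a => rsum m (fun b => F a b)) = rsum m (fun b => rsum n (fun a => F a b)).
Proof.
  induction n; simpl.
  - rewrite rsum_zero; auto.
  - rewrite IHn, <- rsum_plus; auto.
Qed.

Lemma rsum_shift n F : rsum (S n) F = F 0%nat + rsum n (fun l => F (S l)).
Proof. induction n; simpl in *; [lra|]. rewrite IHn; lra. Qed.

Lemma rsum_single n i F : (i < n)%nat ->
  (forall j, (j < n)%nat -> j <> i -> F j = 0) -> rsum n F = F i.
Proof.
  induction n; intros Hi H; [lia|]. simpl.
  destruct (Nat.eq_dec i n) as [->|Hne].
  - rewrite (rsum_ext n F (fun _ => 0)), rsum_zero; [lra|].
    intros l Hl; apply H; lia.
  - rewrite IHn, (H n); [lra|lia|lia|lia|intros; apply H; lia].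
Qed.

Lemma rsum_extend n m F : (n <= m)%nat -> (forall l, (n <= l < m)%nat -> F l = 0) ->
  rsum m F = rsum n F.
Proof.
  induction m; intros Hnm H.
  - replace n with 0%nat by lia; auto.
  - destruct (Nat.eq_dec n (S m)) as [->|Hne]; auto.
    simpl. rewrite IHm, (H m); [lra|lia|lia|intros; apply H; lia].
Qed.

Lemma rsum_le n F G : (forall l, (l < n)%nat -> F l <= G l) -> rsum n F <= rsum n G.
Proof.
  induction n; simpl; intros H; [lra|].
  pose proof (H n ltac:(lia)). pose proof (IHn ltac:(intros; apply H; lia)). lra.
Qed.

Lemma rsum_nonneg n F : (forall l, (l < n)%nat -> 0 <= F l) -> 0 <= rsum n F.
Proof. intros H. rewrite <- (rsum_zero n). apply rsum_le; auto. Qed.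

Lemma rsum_abs_le n F G : (forall l, (l < n)%nat -> Rabs (F l) <= G l) ->
  Rabs (rsum n F) <= rsum n G.
Proof.
  induction n; simpl; intros H; [rewrite Rabs_R0; lra|].
  eapply Rle_trans; [apply Rabs_triang|].
  pose proof (H n ltac:(lia)). pose proof (IHn ltac:(intros; apply H; lia)). lra.
Qed.

Lemma rsum_lin_bound n a b E : (forall l, (l < n)%nat -> Rabs (b l) <= E) ->
  Rabs (rsum n (fun l => a l * b l)) <= rsum n (fun l => Rabs (a l)) * E.
Proof.
  intros H. rewrite rsum_mulr. apply rsum_abs_le. intros l Hl.
  rewrite Rabs_mult. specialize (H l Hl). pose proof (Rabs_pos (a l)). nra.
Qed.

Lemma rsum_term_le n F i : (i < n)%nat -> (forall l, (l < n)%nat -> 0 <= F l) ->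
  F i <= rsum n F.
Proof.
  induction n; intros Hi H; [lia|]. simpl.
  pose proof (H n ltac:(lia)).
  destruct (Nat.eq_dec i n) as [->|Hne].
  - pose proof (rsum_nonneg n F ltac:(intros; apply H; lia)). lra.
  - pose proof (IHn ltac:(lia) ltac:(intros; apply H; lia)). lra.
Qed.

Lemma finite_common_bound n (Pr : nat -> R -> Prop) :
  (forall j M M', Pr j M -> M <= M' -> Pr j M') ->
  (forall j, (j < n)%nat -> exists M, Pr j M) ->
  exists M, forall j, (j < n)%nat -> Pr j M.
Proof.
  intros Hm; induction n; intros H.
  - exists 0; intros; lia.
  - destruct IHn as [M1 HM1]; [intros; apply H; lia|].
    destruct (H n ltac:(lia)) as [M2 HM2].
    exists (Rmax M1 M2). intros j Hj. destruct (Nat.eq_dec j n) as [->|].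
    + eapply Hm; [eauto|apply Rmax_r].
    + eapply Hm; [apply HM1; lia|apply Rmax_l].
Qed.

(** * Newton basis and backward differences

    [gtilde j] is the Newton polynomial x(x+1)...(x+j-1)/j! of degree [j], and
    [bdiff i f] is the i-th backward difference of [f] at 0 with unit step,
    sum_l (-1)^l C(i,l) f(-l).  The two families are biorthogonal, which gives
    Newton's backward interpolation formula. *)

Definition binom0 (n l : nat) : R := if (l <=? n)%nat then Binomial.C n l else 0.

Lemma binom0_n0 n : binom0 n 0 = 1.
Proof. apply C_n_0. Qed.

Lemma binom0_big n l : (n < l)%nat -> binom0 n l = 0.
Proof. intros H. unfold binom0. destruct (Nat.leb_spec l n); [lia|auto]. Qed.

Lemma binom0_pascal n l : binom0 (S n) (S l) = binom0 n l + binom0 n (S l).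
Proof.
  unfold binom0. destruct (Nat.leb_spec (S l) (S n)); destruct (Nat.leb_spec l n);
  destruct (Nat.leb_spec (S l) n); try lia.
  - rewrite pascal; auto.
  - assert (l = n) by lia. subst. rewrite !C_n_n. lra.
  - lra.
Qed.

Lemma gtilde_0 x : gtilde 0 x = 1.
Proof. unfold gtilde; simpl; lra. Qed.

Lemma gtilde_S j x : gtilde (S j) x = gtilde j x * (x + INR j) / INR (S j).
Proof.
  unfold gtilde. change (gbinom (- x) (S j)) with (gbinom (- x) j * (- x - INR j) / INR (S j)).
  change ((-1) ^ S j) with (-1 * (-1) ^ j).
  field. apply not_0_INR; lia.
Qed.

Lemma gtilde_S_at0 j : gtilde (S j) 0 = 0.
Proof.
  induction j; rewrite gtilde_S; [rewrite gtilde_0; simpl; field|].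
  rewrite IHj. field. apply not_0_INR; lia.
Qed.

Lemma gtilde_diff j x : gtilde (S j) x - gtilde (S j) (x - 1) = gtilde j x.
Proof.
  induction j.
  - rewrite !gtilde_S, !gtilde_0. simpl; field.
  - assert (E : gtilde (S j) (x - 1) = gtilde (S j) x - gtilde j x) by lra.
    rewrite !(gtilde_S (S j)), E, (gtilde_S j x), !S_INR.
    pose proof (pos_INR j). field. lra.
Qed.

Lemma gtilde_mulx j x : x * gtilde j x = INR (S j) * gtilde (S j) x - INR j * gtilde j x.
Proof. rewrite gtilde_S. field. apply not_0_INR; lia. Qed.

Lemma gtilde_bound j x : Rabs (gtilde j x) <= (Rabs x + INR j) ^ j.
Proof.
  induction j.
  - rewrite gtilde_0, Rabs_R1. simpl; lra.
  - pose proof (pos_INR j) as Hj0. pose proof (Rabs_pos x) as Hx0.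
    assert (HS : 1 <= INR (S j)) by (rewrite S_INR; lra).
    assert (Hx : Rabs (x + INR j) <= Rabs x + INR j).
    { eapply Rle_trans; [apply Rabs_triang|]. rewrite (Rabs_right (INR j)); lra. }
    assert (Hmono : (Rabs x + INR j) ^ S j <= (Rabs x + INR (S j)) ^ S j)
      by (apply pow_incr; rewrite S_INR; lra).
    rewrite gtilde_S, Rabs_div, (Rabs_right (INR (S j))), Rabs_mult by lra.
    apply (Rle_trans _ (Rabs (gtilde j x) * Rabs (x + INR j))).
    + unfold Rdiv. rewrite <- Rmult_1_r. apply Rmult_le_compat_l.
      * apply Rmult_le_pos; apply Rabs_pos.
      * rewrite <- Rinv_1. apply Rinv_le_contravar; lra.
    + eapply Rle_trans; [|exact Hmono]. simpl pow. rewrite Rmult_comm.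
      apply Rmult_le_compat; auto using Rabs_pos.
Qed.

Definition bdiff (i : nat) (f : R -> R) : R :=
  rsum (S i) (fun l => (-1) ^ l * binom0 i l * f (- INR l)).

Lemma bdiff_ext i f g : (forall x, f x = g x) -> bdiff i f = bdiff i g.
Proof. intros H. unfold bdiff. apply rsum_ext. intros. rewrite H; auto. Qed.

Lemma bdiff_add i f g : bdiff i (fun x => f x + g x) = bdiff i f + bdiff i g.
Proof. unfold bdiff. rewrite <- rsum_plus. apply rsum_ext. intros; ring. Qed.

Lemma bdiff_scal i c f : bdiff i (fun x => c * f x) = c * bdiff i f.
Proof. unfold bdiff. rewrite <- rsum_scal. apply rsum_ext. intros; ring. Qed.

Lemma bdiff_sub i f g : bdiff i (fun x => f x - g x) = bdiff i f - bdiff i g.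
Proof. unfold bdiff. rewrite <- rsum_minus. apply rsum_ext. intros; ring. Qed.

Lemma bdiff_0 f : bdiff 0 f = f 0.
Proof. unfold bdiff. simpl. rewrite binom0_n0. replace (-0) with 0 by lra. lra. Qed.

Lemma bdiff_S i f : bdiff (S i) f = bdiff i f - bdiff i (fun x => f (x - 1)).
Proof.
  unfold bdiff. rewrite rsum_shift.
  set (H := fun l => (-1) ^ l * binom0 i l * f (- INR l)).
  assert (E : rsum (S i) (fun l => (-1) ^ S l * binom0 (S i) (S l) * f (- INR (S l)))
     = rsum (S i) (fun l => H (S l))
       - rsum (S i) (fun l => (-1) ^ l * binom0 i l * f (- INR l - 1))).
  { rewrite <- rsum_minus. apply rsum_ext. intros l _. unfold H.
    rewrite binom0_pascal, S_INR. replace (- (INR l + 1)) with (- INR l - 1) by ring.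
    simpl. ring. }
  assert (E2 : rsum (S (S i)) H = rsum (S i) H).
  { apply rsum_extend; [lia|]. intros l Hl. unfold H. rewrite binom0_big; [ring|lia]. }
  pose proof (rsum_shift (S i) H) as E3.
  assert (E4 : H 0%nat = (-1) ^ 0 * binom0 (S i) 0 * f (- INR 0))
    by (unfold H; rewrite !binom0_n0; ring).
  lra.
Qed.

Lemma bdiff_gtilde i j : bdiff i (gtilde j) = if (i =? j)%nat then 1 else 0.
Proof.
  revert j; induction i; intros j.
  - rewrite bdiff_0. destruct j; simpl; [apply gtilde_0|apply gtilde_S_at0].
  - rewrite bdiff_S. destruct j.
    + rewrite (bdiff_ext i (fun x => gtilde 0 (x - 1)) (gtilde 0))
        by (intros; rewrite !gtilde_0; auto).
      simpl. lra.
    + rewrite (bdiff_ext i (fun x => gtilde (S j) (x - 1)) (fun x => gtilde (S j) x - gtilde j x))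
        by (intros x; pose proof (gtilde_diff j x); lra).
      rewrite bdiff_sub, (IHi j). simpl. lra.
Qed.

(** [NewtonSpan K f]: [f] is a linear combination of gtilde 0, ..., gtilde (K-1),
    i.e. a polynomial of degree < K. *)
Inductive NewtonSpan (K : nat) : (R -> R) -> Prop :=
 | NS_basis j : (j < K)%nat -> NewtonSpan K (gtilde j)
 | NS_add f g : NewtonSpan K f -> NewtonSpan K g -> NewtonSpan K (fun x => f x + g x)
 | NS_scal c f : NewtonSpan K f -> NewtonSpan K (fun x => c * f x)
 | NS_ext f g : NewtonSpan K f -> (forall x, f x = g x) -> NewtonSpan K g.

Lemma newton_formula K f : NewtonSpan K f ->
  forall x, f x = rsum K (fun i => gtilde i x * bdiff i f).
Proof.
  induction 1; intros x.
  - rewrite (rsum_single K j); auto.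
    + rewrite bdiff_gtilde, Nat.eqb_refl. ring.
    + intros l Hl Hne. rewrite bdiff_gtilde. destruct (Nat.eqb_spec l j); [lia|ring].
  - rewrite IHNewtonSpan1, IHNewtonSpan2, <- rsum_plus.
    apply rsum_ext. intros. rewrite bdiff_add. ring.
  - rewrite IHNewtonSpan, <- rsum_scal. apply rsum_ext. intros. rewrite bdiff_scal. ring.
  - rewrite <- H0, IHNewtonSpan. apply rsum_ext. intros. rewrite (bdiff_ext l g f); auto.
Qed.

Lemma NewtonSpan_mono K K' f : (K <= K')%nat -> NewtonSpan K f -> NewtonSpan K' f.
Proof.
  intros HK; induction 1; [apply NS_basis; lia|apply NS_add|apply NS_scal|eapply NS_ext]; eauto.
Qed.

Lemma NewtonSpan_const K c : (1 <= K)%nat -> NewtonSpan K (fun _ => c).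
Proof.
  intros HK. apply (NS_ext K (fun x => c * gtilde 0 x)).
  - apply NS_scal, NS_basis; lia.
  - intros; rewrite gtilde_0; ring.
Qed.

Lemma NewtonSpan_rsum K n F : (1 <= K)%nat -> (forall j, (j < n)%nat -> NewtonSpan K (F j)) ->
  NewtonSpan K (fun x => rsum n (fun j => F j x)).
Proof.
  intros HK; induction n; intros H; simpl.
  - apply NewtonSpan_const; auto.
  - apply NS_add; [apply IHn; intros; apply H; lia|apply H; lia].
Qed.

Lemma NewtonSpan_mulx K f : NewtonSpan K f -> NewtonSpan (S K) (fun x => x * f x).
Proof.
  induction 1.
  - apply (NS_ext (S K) (fun x => INR (S j) * gtilde (S j) x + (- INR j) * gtilde j x)).
    + apply NS_add; apply NS_scal; apply NS_basis; lia.
    + intros x. rewrite gtilde_mulx. ring.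
  - apply (NS_ext _ _ _ (NS_add _ _ _ IHNewtonSpan1 IHNewtonSpan2)). intros; simpl; ring.
  - apply (NS_ext _ _ _ (NS_scal _ c _ IHNewtonSpan)). intros; simpl; ring.
  - apply (NS_ext _ _ _ IHNewtonSpan). intros; simpl. rewrite H0; auto.
Qed.

Lemma NewtonSpan_pow c r : NewtonSpan (S r) (fun x => (c + x) ^ r).
Proof.
  induction r.
  - apply (NS_ext _ _ _ (NewtonSpan_const 1 1 ltac:(lia))). intros; simpl; ring.
  - apply (NS_ext (S (S r)) (fun x => c * (c + x) ^ r + x * (c + x) ^ r)).
    + apply NS_add; [apply NS_scal, (NewtonSpan_mono (S r)); auto|].
      apply NewtonSpan_mulx; auto.
    + intros; simpl; ring.
Qed.

Lemma NewtonSpan_scaled_pow K q c a b : (q < K)%nat ->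
  NewtonSpan K (fun x => c * ((a + x) * b) ^ q).
Proof.
  intros Hq. apply (NS_ext K (fun x => (c * b ^ q) * (a + x) ^ q)).
  - apply NS_scal, (NewtonSpan_mono (S q)); [lia|apply NewtonSpan_pow].
  - intros x. rewrite Rpow_mult_distr. ring.
Qed.

Lemma NewtonSpan_cont K f : NewtonSpan K f -> forall x, continuous f x.
Proof.
  induction 1; intros x.
  - apply continuity_pt_filterlim. unfold gtilde.
    apply (continuity_pt_scal (fun s => gbinom (- s) j)). apply gbinom_cont.
  - apply (continuous_plus f g); auto.
  - apply (continuous_mult (fun _ => c) f); auto. apply continuous_const.
  - apply (continuous_ext f g); auto.
Qed.

Definition bdiff_norm (i : nat) : R := rsum (S i) (fun l => Rabs (binom0 i l)).

Lemma bdiff_bound i f E : (forall l, (l <= i)%nat -> Rabs (f (- INR l)) <= E) ->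
  Rabs (bdiff i f) <= bdiff_norm i * E.
Proof.
  intros H. unfold bdiff, bdiff_norm.
  eapply Rle_trans; [apply rsum_lin_bound; intros l Hl; apply H; lia|].
  right. f_equal. apply rsum_ext. intros l _. rewrite Rabs_mult, pow_1_abs. ring.
Qed.

Lemma bdiff_norm_nonneg i : 0 <= bdiff_norm i.
Proof. apply rsum_nonneg. intros; apply Rabs_pos. Qed.

Definition interp_const (K : nat) (X : R) : R :=
  rsum K (fun j => (X + INR j) ^ j * bdiff_norm j) + 1.

Lemma interp_const_ge1 K X : 0 <= X -> 1 <= interp_const K X.
Proof.
  intros HX. unfold interp_const.
  assert (0 <= rsum K (fun j => (X + INR j) ^ j * bdiff_norm j)); [|lra].
  apply rsum_nonneg. intros j _. apply Rmult_le_pos; [|apply bdiff_norm_nonneg].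
  apply pow_le. pose proof (pos_INR j). lra.
Qed.

Lemma newton_interp_error K f g x X E : NewtonSpan K g -> Rabs x <= X ->
  (forall l, (l < K)%nat -> Rabs (f (- INR l) - g (- INR l)) <= E) ->
  Rabs (f x - g x) <= E ->
  Rabs (rsum K (fun j => gtilde j x * bdiff j f) - f x) <= interp_const K X * E.
Proof.
  intros Hg Hx Hnodes Hpt.
  set (r := fun s => f s - g s).
  assert (HE : 0 <= E) by (eapply Rle_trans; [apply Rabs_pos|exact Hpt]).
  assert (Hsplit : rsum K (fun j => gtilde j x * bdiff j f) - f x
                   = rsum K (fun j => gtilde j x * bdiff j r) - r x).
  { assert (Hr : rsum K (fun j => gtilde j x * bdiff j r)
                 = rsum K (fun j => gtilde j x * bdiff j f) - g x).
    { unfold r. rewrite (newton_formula K g Hg x), <- rsum_minus.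
      apply rsum_ext. intros. rewrite bdiff_sub. ring. }
    unfold r at 2. lra. }
  rewrite Hsplit. unfold interp_const.
  eapply Rle_trans; [apply Rabs_triang|]. rewrite Rabs_Ropp, Rmult_plus_distr_r, Rmult_1_l.
  apply Rplus_le_compat; [|exact Hpt].
  rewrite rsum_mulr. apply rsum_abs_le. intros j Hj. rewrite Rabs_mult.
  rewrite Rmult_assoc. apply Rmult_le_compat; auto using Rabs_pos.
  - eapply Rle_trans; [apply gtilde_bound|]. apply pow_incr.
    pose proof (Rabs_pos x). pose proof (pos_INR j). lra.
  - apply bdiff_bound. intros l Hl. apply Hnodes. lia.
Qed.

(** * Exactness of the Adams–Bashforth quadrature

    The weights [alpha k l] come from integrating the Newton backward formula
    over [0,1]; hence sum_l alpha_l f(-l) = int_0^1 f for every polynomial [f]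
    of degree < k. *)

Lemma alpha_combination k f :
  rsum k (fun l => alpha k l * f (- INR l)) = rsum k (fun i => gamma1 i * bdiff i f).
Proof.
  unfold alpha.
  transitivity (rsum k (fun l => rsum k (fun i =>
    if (l <=? i)%nat then (-1) ^ l * Binomial.C i l * gamma1 i * f (- INR l) else 0))).
  { apply rsum_ext; intros l _. rewrite Rmult_assoc, (Rmult_comm _ (f _)), <- Rmult_assoc.
    rewrite <- rsum_scal. apply rsum_ext. intros i _. destruct (l <=? i)%nat; ring. }
  rewrite rsum_swap. apply rsum_ext. intros i Hi. unfold bdiff.
  rewrite <- rsum_scal, (rsum_extend (S i) k); [| lia |].
  - apply rsum_ext. intros l Hl. unfold binom0. destruct (Nat.leb_spec l i); [ring|lia].
  - intros l Hl. destruct (Nat.leb_spec l i); [lia|auto].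
Qed.

Lemma gamma1_integral i : is_RInt (gtilde i) 0 1 (gamma1 i).
Proof.
  unfold gamma1.
  match goal with |- context [RiemannInt ?pr] =>
    pose proof (ex_RInt_Reals_aux_1 _ _ _ pr) as H end.
  apply (is_RInt_scal _ _ _ ((-1) ^ i)) in H.
  eapply is_RInt_ext; [|exact H]. intros x _. reflexivity.
Qed.

Lemma NewtonSpan_integral K f : NewtonSpan K f ->
  is_RInt f 0 1 (rsum K (fun i => gamma1 i * bdiff i f)).
Proof.
  intros Hf.
  assert (Hsum : forall n c, is_RInt (fun x => rsum n (fun i => c i * gtilde i x)) 0 1
                                     (rsum n (fun i => c i * gamma1 i))).
  { intros n c. induction n; simpl.
    - pose proof (@is_RInt_const R_CompleteNormedModule 0 1 0) as H.
      unfold scal in H; simpl in H; unfold mult in H; simpl in H.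
      rewrite Rmult_0_r in H. exact H.
    - apply (is_RInt_plus _ _ _ _ _ _ IHn (is_RInt_scal _ _ _ (c n) _ (gamma1_integral n))). }
  eapply is_RInt_ext.
  - intros x _. symmetry. rewrite (newton_formula K f Hf x).
    apply (rsum_ext K _ (fun i => bdiff i f * gtilde i x)). intros; ring.
  - rewrite (rsum_ext K _ (fun i => bdiff i f * gamma1 i)) by (intros; ring). apply Hsum.
Qed.

Lemma AB_exact k (F f : R -> R) : (forall u, is_derive F u (f u)) -> NewtonSpan k f ->
  F 1 - F 0 = rsum k (fun l => alpha k l * f (- INR l)).
Proof.
  intros HD HS. rewrite alpha_combination.
  assert (H2 : is_RInt f 0 1 (minus (F 1) (F 0))).
  { apply (@is_RInt_derive R_CompleteNormedModule F f 0 1); intros; auto.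
    eapply NewtonSpan_cont; eauto. }
  apply (@is_RInt_unique R_CompleteNormedModule) in H2.
  rewrite (@is_RInt_unique R_CompleteNormedModule _ _ _ _ (NewtonSpan_integral k f HS)) in H2.
  rewrite H2. unfold minus, plus, opp; simpl. ring.
Qed.

Lemma beta_combination k p m F :
  rsum k (fun l => beta k p m l * F (- INR l)) =
  rsum k (fun i => alpha k i *
    rsum k (fun j => gtilde j ((INR m - INR i) / INR p) * bdiff j F)).
Proof.
  set (xi := fun i => (INR m - INR i) / INR p).
  transitivity (rsum k (fun l => rsum k (fun i => rsum k (fun j => alpha k i *
     (if (l <=? j)%nat then (-1) ^ l * Binomial.C j l * gtilde j (xi i) * F (- INR l) else 0))))).
  { apply rsum_ext; intros l _. unfold beta. rewrite rsum_mulr. apply rsum_ext; intros i _.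
    rewrite Rmult_assoc, rsum_mulr, <- rsum_scal. apply rsum_ext; intros j _.
    unfold xi. destruct (l <=? j)%nat; ring. }
  rewrite rsum_swap. apply rsum_ext; intros i _. rewrite rsum_swap.
  rewrite <- rsum_scal. apply rsum_ext; intros j Hj. unfold bdiff.
  rewrite <- !rsum_scal, (rsum_extend (S j) k); [| lia |].
  - apply rsum_ext. intros l Hl. unfold binom0. destruct (Nat.leb_spec l j); [|lia]. unfold xi. ring.
  - intros l Hl. destruct (Nat.leb_spec l j); [lia|ring].
Qed.

(** * Taylor expansion with a bounded remainder *)

(** [is_derive_ext] specialised to real functions, so that the side equation lives in [R]. *)
Lemma is_derive_ext_R (f g : R -> R) x l :
  (forall t, f t = g t) -> is_derive f x l -> is_derive g x l.
Proof. apply is_derive_ext. Qed.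

Definition monom (q : nat) (x : R) : R := x ^ q / INR (fact q).

Lemma monom_0 x : monom 0 x = 1.
Proof. unfold monom; simpl; field. Qed.

Lemma monom_S_at0 q : monom (S q) 0 = 0.
Proof. unfold monom; simpl; rewrite Rmult_0_l; unfold Rdiv; ring. Qed.

Lemma monom_deriv q a t : is_derive (fun t => monom (S q) (t - a)) t (monom q (t - a)).
Proof.
  unfold monom.
  apply (is_derive_ext_R (fun t => / INR (fact (S q)) * (t - a) ^ S q)); [intros; unfold Rdiv; ring|].
  replace ((t - a) ^ q / INR (fact q))
    with (/ INR (fact (S q)) * (INR (S q) * 1 * (t - a) ^ Init.Nat.pred (S q))).
  - apply is_derive_scal, (is_derive_pow (fun t => t - a)). auto_derive; auto; ring.
  - rewrite fact_simpl, mult_INR. simpl Init.Nat.pred.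
    field. split; [apply INR_fact_neq_0|apply not_0_INR; lia].
Qed.

Lemma is_derive_rsum n (F : nat -> R -> R) F' t :
  (forall j, (j < n)%nat -> is_derive (F j) t (F' j)) ->
  is_derive (fun s => rsum n (fun j => F j s)) t (rsum n F').
Proof.
  induction n; intros H; simpl.
  - apply (@is_derive_const R_AbsRing R_NormedModule 0 t).
  - apply (@is_derive_plus R_AbsRing R_NormedModule); [apply IHn; intros; apply H; lia|apply H; lia].
Qed.

Section Taylor.
Variable D : nat -> R -> R.
Hypothesis D_deriv : forall r t, is_derive (D r) t (D (S r) t).

Definition taylor (n r : nat) (a t : R) : R := rsum n (fun q => D (r + q) a * monom q (t - a)).
Definition taylor_rem (n r : nat) (a t : R) : R := D r t - taylor n r a t.

Lemma taylor_deriv n r a t : is_derive (fun t => taylor (S n) r a t) t (taylor n (S r) a t).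
Proof.
  unfold taylor.
  apply (is_derive_ext_R (fun t => D (r + 0)%nat a * monom 0 (t - a)
                        + rsum n (fun q => D (r + S q)%nat a * monom (S q) (t - a))));
    [intros; rewrite rsum_shift; auto|].
  replace (rsum n (fun q => D (S r + q)%nat a * monom q (t - a)))
    with (plus 0 (rsum n (fun q => D (r + S q)%nat a * monom q (t - a)))).
  2:{ unfold plus; simpl. rewrite Rplus_0_l. apply rsum_ext. intros. rewrite <- plus_n_Sm. auto. }
  apply (@is_derive_plus R_AbsRing R_NormedModule).
  - apply (is_derive_ext_R (fun _ => D (r + 0)%nat a)); [intros; rewrite monom_0; ring|].
    apply (@is_derive_const R_AbsRing R_NormedModule).
  - apply is_derive_rsum. intros j _. apply is_derive_scal, monom_deriv.
Qed.

Lemma taylor_rem_deriv n r a t :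
  is_derive (fun t => taylor_rem (S n) r a t) t (taylor_rem n (S r) a t).
Proof.
  apply (@is_derive_minus R_AbsRing R_NormedModule); [apply D_deriv|apply taylor_deriv].
Qed.

Lemma taylor_rem_at n r a : taylor_rem (S n) r a a = 0.
Proof.
  unfold taylor_rem, taylor. rewrite rsum_shift, Rminus_diag, monom_0, Nat.add_0_r.
  rewrite (rsum_ext n _ (fun _ => 0)), rsum_zero; [ring|].
  intros. rewrite monom_S_at0. ring.
Qed.

(** Lagrange-type bound, by induction on [n] using the mean value theorem. *)
Lemma taylor_rem_bound Smax a rho M :
  (forall s t, (s <= Smax)%nat -> Rabs (t - a) <= rho -> Rabs (D s t) <= M) ->
  forall n r t, (r + n <= Smax)%nat -> Rabs (t - a) <= rho ->
  Rabs (taylor_rem n r a t) <= M * Rabs (t - a) ^ n.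
Proof.
  intros HM n. induction n; intros r t Hrn Ht.
  - unfold taylor_rem, taylor. simpl. rewrite Rminus_0_r, Rmult_1_r. apply HM; auto; lia.
  - assert (M0 : 0 <= M).
    { eapply Rle_trans; [apply Rabs_pos|apply (HM 0%nat t); auto; lia]. }
    destruct (MVT_cor4 (fun t => taylor_rem (S n) r a t) (fun t => taylor_rem n (S r) a t)
                a (Rabs (t - a)) (fun c _ => taylor_rem_deriv n r a c) t (Rle_refl _))
      as [c [Hc Hca]].
    rewrite taylor_rem_at, Rminus_0_r in Hc. rewrite Hc, Rabs_mult.
    pose proof (IHn (S r) c ltac:(lia) ltac:(lra)) as Hrem.
    assert (Hpow : Rabs (c - a) ^ n <= Rabs (t - a) ^ n) by (apply pow_incr; split; auto using Rabs_pos).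
    simpl pow. pose proof (Rabs_pos (t - a)). pose proof (Rabs_pos (taylor_rem n (S r) a c)).
    apply (Rle_trans _ (M * Rabs (t - a) ^ n * Rabs (t - a))); [|right; ring].
    apply Rmult_le_compat_r; [auto|].
    eapply Rle_trans; [exact Hrem|]. apply Rmult_le_compat_l; auto.
Qed.
Lemma taylor_affine_span n r a c h : (1 <= n)%nat ->
  NewtonSpan n (fun s => taylor n r a (a + (c + s) * h)).
Proof.
  intros Hn. unfold taylor. apply NewtonSpan_rsum; auto. intros q Hq.
  apply (NS_ext n (fun s => (D (r + q)%nat a / INR (fact q)) * ((c + s) * h) ^ q)).
  - apply NewtonSpan_scaled_pow; auto.
  - intros s. unfold monom. replace (a + (c + s) * h - a) with ((c + s) * h) by ring.
    field. apply INR_fact_neq_0.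
Qed.

Lemma taylor_AB_exact n a c h : (1 <= n)%nat ->
  taylor (S n) 0 a (a + (c + 1) * h) - taylor (S n) 0 a (a + c * h)
  = h * rsum n (fun l => alpha n l * taylor n 1 a (a + (c - INR l) * h)).
Proof.
  intros Hn.
  replace (a + c * h) with (a + (c + 0) * h) by ring.
  rewrite (AB_exact n (fun u => taylor (S n) 0 a (a + (c + u) * h))
                      (fun u => h * taylor n 1 a (a + (c + u) * h))).
  - rewrite <- rsum_scal. apply rsum_ext. intros l _.
    replace (c + - INR l) with (c - INR l) by ring. ring.
  - intros u.
    apply (is_derive_comp (fun t => taylor (S n) 0 a t) (fun u => a + (c + u) * h));
      [apply taylor_deriv|auto_derive; auto; ring].
  - apply NS_scal, taylor_affine_span; auto.
Qed.
End Taylor.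

(** * The exact solution and its derivatives *)

Fixpoint ode_deriv (N : nat) (B : Mat) (y : R -> Vec) (r : nat) (t : R) : Vec :=
  match r with O => y t | S r => matvec N B (ode_deriv N B y r t) end.

Section Solution.
Variables (N : nat) (B : Mat) (y : R -> Vec).
Hypothesis y_deriv : forall i t, (i < N)%nat ->
  derivable_pt_lim (fun s => y s i) t (matvec N B (y t) i).

Lemma ode_deriv_deriv i r t : (i < N)%nat ->
  is_derive (fun s => ode_deriv N B y r s i) t (ode_deriv N B y (S r) t i).
Proof.
  revert i t; induction r; intros i t Hi.
  - apply is_derive_Reals, y_deriv; auto.
  - apply (is_derive_ext_R (fun s => rsum N (fun j => B i j * ode_deriv N B y r s j))); [reflexivity|].
    apply is_derive_rsum. intros j Hj. apply is_derive_scal, IHr; auto.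
Qed.

Lemma ode_deriv_bounded Smax T : exists M, 0 <= M /\
  forall s t i, (s <= Smax)%nat -> (i < N)%nat -> Rabs t <= T -> Rabs (ode_deriv N B y s t i) <= M.
Proof.
  destruct (finite_common_bound (S Smax) (fun s M => forall i t, (i < N)%nat -> Rabs t <= T ->
              Rabs (ode_deriv N B y s t i) <= M)) as [M HM].
  - intros j M M' H1 H2 i t Hi Ht. eapply Rle_trans; [apply H1|]; auto.
  - intros s Hs.
    destruct (finite_common_bound N (fun i M => forall t, Rabs t <= T ->
                Rabs (ode_deriv N B y s t i) <= M)) as [M HM].
    + intros j M M' H1 H2 t Ht. eapply Rle_trans; [apply H1|]; auto.
    + intros i Hi.
      destruct (Rle_lt_dec (- T) T) as [HT|HT].
      * destruct (continuity_ab_maj (fun t => Rabs (ode_deriv N B y s t i)) (- T) T HT)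
          as [c [Hc _]].
        -- intros c _. apply (continuity_pt_comp (fun t => ode_deriv N B y s t i) Rabs);
             [|apply Rcontinuity_abs].
           apply continuity_pt_filterlim, (@ex_derive_continuous R_AbsRing R_NormedModule).
           eexists. apply ode_deriv_deriv; auto.
        -- exists (Rabs (ode_deriv N B y s c i)). intros t Ht. apply Hc, Rabs_le_between; auto.
      * exists 0. intros t Ht. pose proof (Rabs_pos t). lra.
    + exists M. intros; auto.
  - exists (Rmax M 0). split; [apply Rmax_r|].
    intros s t i Hs Hi Ht. eapply Rle_trans; [apply HM; auto; lia|apply Rmax_l].
Qed.
End Solution.

(** Sum of all |B i j|; it bounds every absolute row sum of B. *)
Definition mat_abs_sum (N : nat) (B : Mat) : R := rsum N (fun i => rsum N (fun j => Rabs (B i j))).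

Lemma mat_abs_sum_nonneg N B : 0 <= mat_abs_sum N B.
Proof. apply rsum_nonneg; intros; apply rsum_nonneg; intros; apply Rabs_pos. Qed.

Lemma matvec_row_bound N B i b E : (i < N)%nat -> (forall j, (j < N)%nat -> Rabs (b j) <= E) ->
  Rabs (rsum N (fun j => B i j * b j)) <= mat_abs_sum N B * E.
Proof.
  intros Hi H. assert (0 <= E) by (eapply Rle_trans; [apply Rabs_pos|apply (H i Hi)]).
  eapply Rle_trans; [apply rsum_lin_bound; exact H|].
  apply Rmult_le_compat_r; auto. unfold mat_abs_sum.
  apply (rsum_term_le N (fun i => rsum N (fun j => Rabs (B i j))) i); auto.
  intros; apply rsum_nonneg; intros; apply Rabs_pos.
Qed.

Lemma matvec_diag N P v i : (forall i j, (i < N)%nat -> (j < N)%nat -> i <> j -> P i j = 0) ->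
  (i < N)%nat -> matvec N P v i = P i i * v i.
Proof.
  intros HP Hi. unfold matvec. apply (rsum_single N i (fun j => P i j * v j)); auto.
  intros j Hj Hne. rewrite HP; auto. ring.
Qed.

Definition unitv (i : nat) : Vec := fun j => if (j =? i)%nat then 1 else 0.

Section Norm.
Variables (N : nat) (nrm : Vec -> R).
Hypothesis nrm_ext : forall u v, (forall i, (i < N)%nat -> u i = v i) -> nrm u = nrm v.
Hypothesis nrm_scal : forall c v, nrm (vscale c v) = Rabs c * nrm v.
Hypothesis nrm_triang : forall u v, nrm (vadd u v) <= nrm u + nrm v.
Hypothesis nrm_nonneg : forall v, 0 <= nrm v.

Lemma nrm_vsum n f : nrm (vsum n f) <= rsum n (fun i => nrm (f i)).
Proof.
  induction n; simpl.
  - rewrite (nrm_ext (vsum 0 f) (vscale 0 (fun _ => 0))), nrm_scal, Rabs_R0; [lra|].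
    intros; unfold vsum, vscale; simpl; ring.
  - change (vsum (S n) f) with (vadd (vsum n f) (f n)).
    eapply Rle_trans; [apply nrm_triang|]. lra.
Qed.

Lemma nrm_le_componentwise v E : (forall i, (i < N)%nat -> Rabs (v i) <= E) ->
  nrm v <= rsum N (fun i => nrm (unitv i)) * E.
Proof.
  intros H.
  rewrite (nrm_ext v (vsum N (fun i => vscale (v i) (unitv i)))).
  - eapply Rle_trans; [apply nrm_vsum|]. rewrite rsum_mulr. apply rsum_le.
    intros i Hi. rewrite nrm_scal, Rmult_comm. apply Rmult_le_compat_l; auto.
  - intros j Hj. unfold vsum, vscale, unitv. symmetry.
    rewrite (rsum_single N j); [rewrite Nat.eqb_refl; ring|auto|].
    intros l Hl Hne. destruct (Nat.eqb_spec j l); [lia|ring].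
Qed.
End Norm.

Section History.
Variables (N : nat) (B P : Mat) (k p : nat) (dt : R) (ys neg : nat -> Vec).

Lemma lts_hist_S m i : lts_hist N B P k p dt ys neg (S m) i =
  if (i <=? m)%nat then lts_hist N B P k p dt ys neg m i
  else lts_incr N B P k p dt ys neg m (lts_hist N B P k p dt ys neg m).
Proof. reflexivity. Qed.

Lemma lts_hist_stable m i : (i <= m)%nat ->
  lts_hist N B P k p dt ys neg m i = lts_hist N B P k p dt ys neg i i.
Proof.
  induction m; intros Hi.
  - replace i with 0%nat by lia; auto.
  - rewrite lts_hist_S. destruct (Nat.leb_spec i m).
    + apply IHm; auto.
    + replace i with (S m) by lia. rewrite lts_hist_S. destruct (Nat.leb_spec (S m) m); [lia|auto].
Qed.
End History.

(** * Consistency analysis of one LTS step with exact data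

    Fix a time [tn], a step [dt] < 1 and the fine step h = dt/p; [M] bounds the
    first k+1 derivatives of [y] on the window |t| <= T + k, which contains
    all times involved. *)

Section Consistency.
Variables (N k p : nat) (B P : Mat) (y : R -> Vec).
Hypothesis k_pos : (1 <= k)%nat.
Hypothesis p_pos : (1 <= p)%nat.
Hypothesis y_deriv : forall i t, (i < N)%nat ->
  derivable_pt_lim (fun s => y s i) t (matvec N B (y t) i).
Hypothesis P_offdiag : forall i j, (i < N)%nat -> (j < N)%nat -> i <> j -> P i j = 0.
Hypothesis P_01 : forall i, (i < N)%nat -> P i i = 0 \/ P i i = 1.
Variables (T M tn dt : R).
Hypothesis tn_bound : Rabs tn <= T.
Hypothesis dt_bound : 0 < dt < 1.
Hypothesis M_nonneg : 0 <= M.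
Hypothesis M_bound : forall s t i, (s <= S k)%nat -> (i < N)%nat -> Rabs t <= T + INR k ->
  Rabs (ode_deriv N B y s t i) <= M.

Let h := dt / INR p.
Let dy (i : nat) : nat -> R -> R := fun r t => ode_deriv N B y r t i.

Lemma INR_k_ge1 : 1 <= INR k.
Proof. apply (le_INR 1 k) in k_pos. simpl in k_pos. lra. Qed.

Lemma INR_p_ge1 : 1 <= INR p.
Proof. apply (le_INR 1 p) in p_pos. simpl in p_pos. lra. Qed.

Lemma fine_step_facts : 0 < h /\ h <= dt /\ INR p * h = dt.
Proof.
  pose proof INR_p_ge1. unfold h. split; [apply Rdiv_lt_0_compat; lra|].
  split; [|field; lra].
  unfold Rdiv. rewrite <- (Rmult_1_r dt) at 2. apply Rmult_le_compat_l; [lra|].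
  rewrite <- Rinv_1. apply Rinv_le_contravar; lra.
Qed.

Lemma rem_small n r i z rho : (r + n <= S k)%nat -> (i < N)%nat ->
  Rabs z <= rho -> rho <= INR k ->
  Rabs (taylor_rem (dy i) n r tn (tn + z)) <= M * rho ^ n.
Proof.
  intros Hrn Hi Hz Hrho.
  eapply Rle_trans.
  - apply (taylor_rem_bound (dy i) (fun r t => ode_deriv_deriv N B y y_deriv i r t Hi)
             (S k) tn (INR k) M); auto.
    + intros s t Hs Ht. apply M_bound; auto.
      replace t with (tn + (t - tn)) by ring.
      eapply Rle_trans; [apply Rabs_triang|lra].
    + replace (tn + z - tn) with z by ring. lra.
  - replace (tn + z - tn) with z by ring.
    apply Rmult_le_compat_l; auto. apply pow_incr. split; [apply Rabs_pos|auto].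
Qed.

Lemma fine_node_bound m l : (m < p)%nat -> (l < k)%nat -> Rabs ((INR m - INR l) / INR p) <= INR k.
Proof.
  intros Hm Hl. pose proof INR_p_ge1. pose proof INR_k_ge1.
  apply lt_INR in Hm. apply lt_INR in Hl. pose proof (pos_INR m). pose proof (pos_INR l).
  rewrite Rabs_div, (Rabs_right (INR p)) by lra.
  apply Rmult_le_reg_r with (INR p); [lra|]. unfold Rdiv. rewrite Rmult_assoc, Rinv_l, Rmult_1_r by lra.
  apply Rabs_le. nra.
Qed.

Lemma fine_offset_bound m l : (m < p)%nat -> (l < k)%nat ->
  Rabs ((INR m - INR l) * h) <= INR k * dt.
Proof.
  intros Hm Hl. replace ((INR m - INR l) * h) with ((INR m - INR l) / INR p * dt)
    by (unfold h; field; pose proof INR_p_ge1; lra).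
  rewrite Rabs_mult, (Rabs_right dt) by lra.
  apply Rmult_le_compat_r; [lra|]. apply fine_node_bound; auto.
Qed.

Definition asum : R := rsum k (fun l => Rabs (alpha k l)).

Lemma asum_nonneg : 0 <= asum.
Proof. apply rsum_nonneg; intros; apply Rabs_pos. Qed.

Lemma coarse_interp_error i xi : (i < N)%nat -> Rabs xi <= INR k ->
  Rabs (rsum k (fun j => gtilde j xi * bdiff j (fun s => y (tn + s * dt) i)) - y (tn + xi * dt) i)
  <= interp_const k (INR k) * (M * (INR k * dt) ^ k).
Proof.
  intros Hi Hxi. pose proof INR_k_ge1.
  assert (Hdev : forall s, y (tn + s * dt) i - taylor (dy i) k 0 tn (tn + (0 + s) * dt)
                           = taylor_rem (dy i) k 0 tn (tn + s * dt))
    by (intros; rewrite Rplus_0_l; reflexivity).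
  assert (Hkdt : INR k * dt <= INR k) by nra.
  apply (newton_interp_error k (fun s => y (tn + s * dt) i) (fun s => taylor (dy i) k 0 tn (tn + (0 + s) * dt)));
    [apply taylor_affine_span; auto|auto| |]; intros; rewrite Hdev;
    apply rem_small; auto; rewrite Rabs_mult, (Rabs_right dt) by lra.
  - apply Rmult_le_compat_r; [lra|]. rewrite Rabs_Ropp, Rabs_right by (apply Rle_ge, pos_INR).
    apply le_INR; lia.
  - apply Rmult_le_compat_r; lra.
Qed.

Definition interp_bound : R := asum * interp_const k (INR k) * M * INR k ^ k.

Lemma beta_error m j : (m < p)%nat -> (j < N)%nat ->
  Rabs (rsum k (fun l => beta k p m l * y (tn - INR l * dt) j)
        - rsum k (fun l => alpha k l * y (tn + (INR m - INR l) * h) j))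
  <= interp_bound * dt ^ k.
Proof.
  intros Hm Hj. set (F := fun s => y (tn + s * dt) j).
  rewrite (rsum_ext k _ (fun l => beta k p m l * F (- INR l)))
    by (intros; unfold F; replace (tn + - INR l * dt) with (tn - INR l * dt) by ring; auto).
  rewrite (rsum_ext k (fun l => alpha k l * y (tn + (INR m - INR l) * h) j)
                      (fun l => alpha k l * F ((INR m - INR l) / INR p))).
  2:{ intros. unfold F, h. replace ((INR m - INR l) / INR p * dt) with ((INR m - INR l) * (dt / INR p))
        by (field; pose proof INR_p_ge1; lra). auto. }
  rewrite beta_combination, <- rsum_minus.
  rewrite (rsum_ext k _ (fun l => alpha k l *
     (rsum k (fun jj => gtilde jj ((INR m - INR l) / INR p) * bdiff jj F) - F ((INR m - INR l) / INR p))))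
    by (intros; ring).
  eapply Rle_trans; [apply rsum_lin_bound|].
  - intros l Hl. apply coarse_interp_error; auto. apply fine_node_bound; auto.
  - unfold interp_bound, asum. rewrite Rpow_mult_distr. right; ring.
Qed.

Definition local_bound : R := asum * M * INR k ^ k + 2 * M.

Lemma ab_local_error i m : (i < N)%nat -> (m < p)%nat ->
  Rabs (h * rsum k (fun l => alpha k l * ode_deriv N B y 1 (tn + (INR m - INR l) * h) i)
        - (y (tn + INR (S m) * h) i - y (tn + INR m * h) i))
  <= local_bound * dt ^ S k.
Proof.
  intros Hi Hm. destruct fine_step_facts as [Hh [Hhd Hph]].
  pose proof INR_k_ge1. pose proof asum_nonneg.
  set (R0 := fun t => taylor_rem (dy i) (S k) 0 tn t).
  set (R1 := fun t => taylor_rem (dy i) k 1 tn t).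
  assert (Hy : forall t, y t i = taylor (dy i) (S k) 0 tn t + R0 t)
    by (intros; unfold R0, taylor_rem, dy; simpl; ring).
  assert (Hy' : forall t, ode_deriv N B y 1 t i = taylor (dy i) k 1 tn t + R1 t)
    by (intros; unfold R1, taylor_rem, dy; simpl; ring).
  assert (Hsplit : h * rsum k (fun l => alpha k l * ode_deriv N B y 1 (tn + (INR m - INR l) * h) i)
        - (y (tn + INR (S m) * h) i - y (tn + INR m * h) i)
      = h * rsum k (fun l => alpha k l * R1 (tn + (INR m - INR l) * h))
        - R0 (tn + INR (S m) * h) + R0 (tn + INR m * h)).
  { pose proof (taylor_AB_exact (dy i) k tn (INR m) h k_pos) as Hex.
    rewrite <- S_INR in Hex.
    rewrite (rsum_ext k _ (fun l => alpha k l * taylor (dy i) k 1 tn (tn + (INR m - INR l) * h)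
                                   + alpha k l * R1 (tn + (INR m - INR l) * h)))
      by (intros; rewrite Hy'; ring).
    rewrite rsum_plus, !Hy. lra. }
  rewrite Hsplit.
  assert (Hmh : forall q, (q <= p)%nat -> Rabs (INR q * h) <= dt).
  { intros q Hq. rewrite Rabs_right by (apply Rle_ge, Rmult_le_pos; [apply pos_INR|lra]).
    rewrite <- Hph. apply Rmult_le_compat_r; [lra|]. apply le_INR; auto. }
  assert (H1 : Rabs (rsum k (fun l => alpha k l * R1 (tn + (INR m - INR l) * h)))
               <= asum * (M * (INR k * dt) ^ k)).
  { apply rsum_lin_bound. intros l Hl. apply rem_small; auto; [apply fine_offset_bound; auto|nra]. }
  assert (H2 : Rabs (R0 (tn + INR (S m) * h)) <= M * dt ^ S k)
    by (apply rem_small; [lia|auto|apply Hmh; lia|lra]).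
  assert (H3 : Rabs (R0 (tn + INR m * h)) <= M * dt ^ S k)
    by (apply rem_small; [lia|auto|apply Hmh; lia|lra]).
  assert (H4 : Rabs (h * rsum k (fun l => alpha k l * R1 (tn + (INR m - INR l) * h)))
               <= dt * (asum * (M * (INR k * dt) ^ k))).
  { rewrite Rabs_mult, Rabs_right by lra. apply Rmult_le_compat; auto using Rabs_pos; lra. }
  unfold Rminus at 1. eapply Rle_trans; [apply Rabs_triang|].
  eapply Rle_trans; [apply Rplus_le_compat_r, Rabs_triang|]. rewrite Rabs_Ropp.
  unfold local_bound. rewrite Rpow_mult_distr in H4. simpl pow in *. nra.
Qed.
Let ys : nat -> Vec := fun l => y (tn - INR l * dt).
Let neg : nat -> Vec := fun j => matvec N P (y (tn - INR j * dt / INR p)).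

Definition fine (m : nat) : Vec := lts_hist N B P k p dt ys neg m m.
Definition fine_err (m i : nat) : R := fine m i - y (tn + INR m * h) i.

Definition coarse_sum (m j : nat) : R := rsum k (fun l => beta k p m l * ys l j).
Definition fine_sum (m j : nat) : R :=
  rsum k (fun l => alpha k l * lts_lookup neg (lts_hist N B P k p dt ys neg m) m l j).
Definition exact_sum (m j : nat) : R :=
  rsum k (fun l => alpha k l * y (tn + (INR m - INR l) * h) j).

Lemma fine_step m i : (i < N)%nat ->
  fine (S m) i = fine m i
   + h * rsum N (fun j => B i j * ((1 - P j j) * coarse_sum m j))
   + h * rsum N (fun j => B i j * (P j j * fine_sum m j)).
Proof.
  intros Hi. unfold fine. rewrite lts_hist_S. destruct (Nat.leb_spec (S m) m); [lia|].
  unfold lts_incr, vadd, vscale, vsub, vsum. fold h.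
  f_equal; [f_equal|]; f_equal; unfold matvec at 1; apply rsum_ext; intros j Hj;
    rewrite matvec_diag; auto.
  unfold coarse_sum, vsum. ring.
Qed.

Lemma fine_err_step m i : (i < N)%nat ->
  fine_err (S m) i = fine_err m i
    + h * rsum N (fun j => B i j * ((1 - P j j) * (coarse_sum m j - exact_sum m j)))
    + h * rsum N (fun j => B i j * (P j j * (fine_sum m j - exact_sum m j)))
    + (h * rsum k (fun l => alpha k l * ode_deriv N B y 1 (tn + (INR m - INR l) * h) i)
       - (y (tn + INR (S m) * h) i - y (tn + INR m * h) i)).
Proof.
  intros Hi.
  assert (Hexact : rsum N (fun j => B i j * exact_sum m j)
            = rsum k (fun l => alpha k l * ode_deriv N B y 1 (tn + (INR m - INR l) * h) i)).
  { unfold exact_sum. simpl ode_deriv. unfold matvec.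
    rewrite (rsum_ext N _ (fun j => rsum k (fun l => B i j * (alpha k l * y (tn + (INR m - INR l) * h) j))))
      by (intros; rewrite rsum_scal; auto).
    rewrite rsum_swap. apply rsum_ext. intros. rewrite <- rsum_scal. apply rsum_ext; intros; ring. }
  assert (Hparts : rsum N (fun j => B i j * ((1 - P j j) * coarse_sum m j))
                   + rsum N (fun j => B i j * (P j j * fine_sum m j))
    = rsum N (fun j => B i j * ((1 - P j j) * (coarse_sum m j - exact_sum m j)))
      + rsum N (fun j => B i j * (P j j * (fine_sum m j - exact_sum m j)))
      + rsum N (fun j => B i j * exact_sum m j))
    by (rewrite <- !rsum_plus; apply rsum_ext; intros; ring).
  apply (f_equal (Rmult h)) in Hparts. rewrite !Rmult_plus_distr_l in Hparts.
  unfold fine_err. rewrite fine_step, <- Hexact by auto. lra.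
Qed.

(** The fine part only sees errors of earlier fine values: for negative
    indices the input P y(...) is exact, since P (P y) = P y. *)
Lemma fine_history_error m l j G : (j < N)%nat -> 0 <= G ->
  (forall q i, (q <= m)%nat -> (i < N)%nat -> Rabs (fine_err q i) <= G) ->
  Rabs (P j j * (lts_lookup neg (lts_hist N B P k p dt ys neg m) m l j
                 - y (tn + (INR m - INR l) * h) j)) <= G.
Proof.
  intros Hj HG Herr.
  assert (HPj : Rabs (P j j) <= 1)
    by (destruct (P_01 j Hj) as [-> | ->]; rewrite ?Rabs_R0, ?Rabs_R1; lra).
  unfold lts_lookup. destruct (Nat.leb_spec l m).
  - rewrite lts_hist_stable by lia. fold (fine (m - l)).
    replace (INR m - INR l) with (INR (m - l)) by (rewrite minus_INR; auto).
    fold (fine_err (m - l) j). rewrite Rabs_mult.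
    pose proof (Herr (m - l)%nat j ltac:(lia) Hj). pose proof (Rabs_pos (P j j)).
    pose proof (Rabs_pos (fine_err (m - l) j)). nra.
  - unfold neg. rewrite matvec_diag by auto.
    replace (tn - INR (l - m) * dt / INR p) with (tn + (INR m - INR l) * h)
      by (rewrite minus_INR by lia; unfold h; field; pose proof INR_p_ge1; lra).
    destruct (P_01 j Hj) as [-> | ->];
      match goal with |- Rabs ?e <= G => replace e with 0 by ring end;
      rewrite Rabs_R0; exact HG.
Qed.

Definition growth : R := 1 + mat_abs_sum N B * asum.
Definition defect : R := (mat_abs_sum N B * interp_bound + local_bound) * dt ^ S k.

Lemma fine_err_recursion m G : (m < p)%nat -> 0 <= G ->
  (forall q i, (q <= m)%nat -> (i < N)%nat -> Rabs (fine_err q i) <= G) ->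
  forall i, (i < N)%nat -> Rabs (fine_err (S m) i) <= growth * G + defect.
Proof.
  intros Hm HG Herr i Hi.
  destruct fine_step_facts as [Hh [Hhd Hph]].
  pose proof (mat_abs_sum_nonneg N B) as HB. pose proof asum_nonneg as HA.
  assert (HZ1 : Rabs (rsum N (fun j => B i j * ((1 - P j j) * (coarse_sum m j - exact_sum m j))))
                <= mat_abs_sum N B * (interp_bound * dt ^ k)).
  { apply matvec_row_bound; auto. intros j Hj. rewrite Rabs_mult.
    assert (Rabs (1 - P j j) <= 1)
      by (destruct (P_01 j Hj) as [-> | ->]; rewrite ?Rminus_0_r, ?Rminus_diag, ?Rabs_R0, ?Rabs_R1; lra).
    rewrite <- (Rmult_1_l (interp_bound * dt ^ k)).
    apply Rmult_le_compat; auto using Rabs_pos. apply beta_error; auto. }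
  assert (HZ2 : Rabs (rsum N (fun j => B i j * (P j j * (fine_sum m j - exact_sum m j))))
                <= mat_abs_sum N B * (asum * G)).
  { apply matvec_row_bound; auto. intros j Hj. unfold fine_sum, exact_sum.
    rewrite <- rsum_minus, <- rsum_scal. unfold asum. rewrite rsum_mulr.
    apply rsum_abs_le. intros l Hl.
    match goal with |- Rabs (P j j * (alpha k l * ?a - alpha k l * ?b)) <= _ =>
      replace (P j j * (alpha k l * a - alpha k l * b)) with (alpha k l * (P j j * (a - b))) by ring end.
    rewrite Rabs_mult. apply Rmult_le_compat_l; [apply Rabs_pos|]. apply fine_history_error; auto. }
  pose proof (ab_local_error i m Hi Hm) as Hloc.
  pose proof (Herr m i ltac:(lia) Hi) as Hprev.
  rewrite fine_err_step by auto. eapply Rle_trans; [apply Rabs_4|].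
  rewrite !Rabs_mult, (Rabs_right h) by lra.
  assert (h * Rabs (rsum N (fun j => B i j * ((1 - P j j) * (coarse_sum m j - exact_sum m j))))
          <= dt * (mat_abs_sum N B * (interp_bound * dt ^ k)))
    by (apply Rmult_le_compat; auto using Rabs_pos; lra).
  assert (h * Rabs (rsum N (fun j => B i j * (P j j * (fine_sum m j - exact_sum m j))))
          <= 1 * (mat_abs_sum N B * (asum * G)))
    by (apply Rmult_le_compat; auto using Rabs_pos; lra).
  unfold growth, defect. simpl pow in *. nra.
Qed.

Lemma defect_nonneg : 0 <= defect.
Proof.
  pose proof asum_nonneg. pose proof (mat_abs_sum_nonneg N B). pose proof INR_k_ge1.
  assert (0 <= INR k ^ k) by (apply pow_le; lra).
  assert (0 <= interp_const k (INR k)) by (pose proof (interp_const_ge1 k (INR k) (pos_INR k)); lra).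
  unfold defect, interp_bound, local_bound. apply Rmult_le_pos; [|apply pow_le; lra].
  apply Rplus_le_le_0_compat; [apply Rmult_le_pos; auto; repeat apply Rmult_le_pos; auto|].
  apply Rplus_le_le_0_compat; [repeat apply Rmult_le_pos; auto|lra].
Qed.

Lemma fine_err_bound m : (m <= p)%nat -> forall q i, (q <= m)%nat -> (i < N)%nat ->
  Rabs (fine_err q i) <= INR m * growth ^ m * defect.
Proof.
  pose proof defect_nonneg as HS. pose proof (mat_abs_sum_nonneg N B). pose proof asum_nonneg.
  assert (HK : 1 <= growth) by (unfold growth; nra).
  induction m; intros Hm q i Hq Hi.
  - replace q with 0%nat by lia. unfold fine_err, fine. simpl lts_hist. unfold ys.
    replace (tn - INR 0 * dt) with (tn + INR 0 * h) by (simpl; ring).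
    rewrite Rminus_diag, Rabs_R0. simpl. lra.
  - assert (HKm : 1 <= growth ^ m) by (apply pow_R1_Rle; auto).
    assert (HG : 0 <= INR m * growth ^ m * defect)
      by (apply Rmult_le_pos; [apply Rmult_le_pos; [apply pos_INR|lra]|auto]).
    assert (Hmono : INR m * growth ^ m * defect <= INR (S m) * growth ^ S m * defect).
    { rewrite S_INR. simpl pow. apply Rmult_le_compat_r; auto. pose proof (pos_INR m).
      assert (growth ^ m <= growth * growth ^ m) by nra.
      assert (INR m * growth ^ m <= INR m * (growth * growth ^ m)) by (apply Rmult_le_compat_l; auto).
      nra. }
    destruct (Nat.eq_dec q (S m)) as [->|Hne].
    + apply (Rle_trans _ (growth * (INR m * growth ^ m * defect) + defect)).
      * apply fine_err_recursion; [lia|auto| |auto]. intros; apply IHm; auto; lia.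
      * assert (1 <= growth * growth ^ m) by nra.
        assert (defect <= growth * growth ^ m * defect) by nra.
        rewrite S_INR. simpl pow. nra.
    + eapply Rle_trans; [apply IHm; auto; lia|auto].
Qed.

Lemma lts_step_error i : (i < N)%nat ->
  Rabs (lts_step N B P k p dt ys neg i - y (tn + dt) i)
  <= INR p * growth ^ p * (mat_abs_sum N B * interp_bound + local_bound) * dt ^ (k + 1).
Proof.
  intros Hi. destruct fine_step_facts as [_ [_ Hph]].
  rewrite Nat.add_1_r, Rmult_assoc. fold defect.
  replace (tn + dt) with (tn + INR p * h) by (rewrite Hph; auto).
  apply (fine_err_bound p); auto.
Qed.
End Consistency.

Theorem mainTheorem2 (N k p : nat) (B P : Mat) (y0 : Vec) (y : R -> Vec)
  (nrm : Vec -> R) :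
  (1 <= k)%nat -> (1 <= p)%nat ->
  (* P diagonal with entries in {0,1} *)
  (forall i j, (i < N)%nat -> (j < N)%nat -> i <> j -> P i j = 0) ->
  (forall i, (i < N)%nat -> P i i = 0 \/ P i i = 1) ->
  (* y solves y' = B y, y(0) = y0, i.e. y(t) = e^{tB} y0 *)
  (forall i, (i < N)%nat -> y 0 i = y0 i) ->
  (forall i t, (i < N)%nat ->
     derivable_pt_lim (fun s => y s i) t (matvec N B (y t) i)) ->
  (* nrm is a norm on R^N *)
  (forall u v, (forall i, (i < N)%nat -> u i = v i) -> nrm u = nrm v) ->
  (forall v, 0 <= nrm v) ->
  (forall v, nrm v = 0 -> forall i, (i < N)%nat -> v i = 0) ->
  (forall c v, nrm (vscale c v) = Rabs c * nrm v) ->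
  (forall u v, nrm (vadd u v) <= nrm u + nrm v) ->
  forall T : R, 0 <= T ->
  exists Cst delta : R, 0 < delta /\
    forall tn dt : R, Rabs tn <= T -> 0 < dt < delta ->
      nrm (vsub (lts_step N B P k p dt
                   (fun l => y (tn - INR l * dt))
                   (fun j => matvec N P (y (tn - INR j * dt / INR p))))
                (y (tn + dt)))
        <= Cst * dt ^ (k + 1).
Proof.
  intros Hk Hp HPoff HP01 _ Hder Hext Hnn _ Hscal Htri T _.
  destruct (ode_deriv_bounded N B y Hder (S k) (T + INR k)) as [M [HM0 HM]].
  set (Cloc := INR p * growth N k B ^ p * (mat_abs_sum N B * interp_bound k M + local_bound k M)).
  exists (rsum N (fun i => nrm (unitv i)) * Cloc), 1. split; [lra|].
  intros tn dt Htn Hdt.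
  rewrite Rmult_assoc. apply (nrm_le_componentwise N nrm Hext Hscal Htri Hnn).
  intros i Hi. apply (lts_step_error N k p B P y Hk Hp Hder HPoff HP01 T M tn dt); auto.
Qed.
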